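(* Let $\pi_k$ (target policy), $\beta_k$ and $\beta_{k+1}$ (behavioral policies) be stationary policies, let $\pi_{k+1}=\beta_{k+1}$, and let $\mu_k=d^{\beta_k}$. Let $q$ be an estimate of $Q^{\pi_k}$. Assume (i) $\max_{s}d_{TV}\big(\beta_k(\cdot|s),\beta_{k+1}(\cdot|s)\big)\le\delta(1-\gamma)$; (ii) $\varepsilon(\mu_k,q)\le\varepsilon$; and (iii) $|Q^{\pi_k}(s,a)-q(s,a)|\le\frac{1}{1-\gamma}$ for all $(s,a)$. Then $$V^{\pi_{k+1}}(s_0)-V^{\pi_k}(s_0)\;\ge\;\frac{1}{1-\gamma}\left(\mathbb{A}^{\pi_k}_{\pi_{k+1}}-\varepsilon-\frac{2\delta}{1-\gamma}\right).$$
   Context: Finite discounted MDP $(\mathcal{S},\mathcal{A},P,r,\gamma,s_0)$ with rewards in $[0,1]$, $\gamma\in[0,1)$, fixed initial state $s_0$. For a stationary policy $\pi$: $V^\pi,Q^\pi$ are its value and action-value functions and $d^{\pi}(s,a)=(1-\gamma)\sum_{t\ge0}\gamma^t\Pr_\pi(s_t=s,a_t=a)$ its discounted state-action visitation distribution from $s_0$. Weighted action-value error of an estimate $q$ of $Q^{\pi_k}$ on a distribution $\mu$: $\varepsilon(\mu,q)=\sum_{s,a}\mu(s,a)|Q^{\pi_k}(s,a)-q(s,a)|$. Estimated expected advantage: $\mathbb{A}^{\pi_k}_{\pi_{k+1}}=\mathbb{E}_{(s,a)\sim d^{\pi_{k+1}}}[q(s,a)-V^{\pi_k}(s)]$. Total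 variation: $d_{TV}(p,q)=\frac12\sum_x|p(x)-q(x)|$. *)

From HB Require Import structures.
From mathcomp Require Import all_boot all_order all_algebra.
From mathcomp Require Import all_classical all_reals all_analysis.
Set Implicit Arguments. Unset Strict Implicit. Unset Printing Implicit Defensive.
Import Order.TTheory GRing.Theory Num.Theory.
Local Open Scope ring_scope.

Section MDP.
Variables (R : realType) (S A : finType).

(* transition kernel P s a s' = P(s' | s, a); policy pi s a = pi(a | s) *)
Definition is_dist (T : finType) (p : T -> R) : Prop :=
  (forall x, 0 <= p x) /\ \sum_x p x = 1.

Definition is_kernel (P : S -> A -> S -> R) : Prop :=
  forall s a, is_dist (P s a).

Definition is_policy (pi : S -> A -> R) : Prop :=
  forall s, is_dist (pi s).

Fixpoint state_dist (P : S -> A -> S -> R) (pi : S -> A -> R) (s0 : S)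
    (t : nat) : S -> R :=
  match t with
  | O => fun s => if s == s0 then 1 else 0
  | t'.+1 => fun s' =>
      \sum_s \sum_a state_dist P pi s0 t' s * pi s a * P s a s'
  end.

Definition sa_dist P pi s0 t (s : S) (a : A) : R :=
  state_dist P pi s0 t s * pi s a.

(* infinite sums are limits of partial sums (they converge: finite MDP, gamma < 1) *)
Definition Vf (P : S -> A -> S -> R) (r : S -> A -> R) (gamma : R)
    (pi : S -> A -> R) (s : S) : R :=
  limn (fun n => \sum_(0 <= t < n) (gamma ^+ t * \sum_s' \sum_a sa_dist P pi s t s' a * r s' a)).

Definition Qf P r gamma pi (s : S) (a : A) : R :=
  r s a + gamma * \sum_s' P s a s' * Vf P r gamma pi s'.

Definition dvisit P (gamma : R) pi (s0 : S) (s : S) (a : A) : R :=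
  (1 - gamma) * limn (fun n => \sum_(0 <= t < n) (gamma ^+ t * sa_dist P pi s0 t s a)).

Definition wQerr (Qpi : S -> A -> R) (mu : S -> A -> R) (q : S -> A -> R) : R :=
  \sum_s \sum_a mu s a * `|Qpi s a - q s a|.

Definition est_adv (d : S -> A -> R) (q : S -> A -> R) (V : S -> R) : R :=
  \sum_s \sum_a d s a * (q s a - V s).

Definition dTV (T : finType) (p p' : T -> R) : R :=
  2^-1 * \sum_x `|p x - p' x|.

End MDP.

From HB Require Import structures.
From mathcomp Require Import all_boot all_order all_algebra.
From mathcomp Require Import all_classical all_reals all_analysis.
From mathcomp Require Import ring lra.
Set Implicit Arguments. Unset Strict Implicit. Unset Printing Implicit Defensive.
Import Order.TTheory GRing.Theory Num.Theory numFieldNormedType.Exports.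
Local Open Scope ring_scope.
Local Open Scope classical_set_scope.

(* Let L be the unnormalised discounted state-action occupancy of the new policy
   (so d^{pi_{k+1}} = (1 - gamma) L).  Telescoping along its trajectory gives the
   performance-difference identity V^{pi_{k+1}}(s0) - V(s0) = sum L (r + gamma P V - V),
   valid for every V.  With V = V^{pi_k} the integrand is Q - V = (Q - q) + (q - V);
   the second part is the estimated advantage.  The first part is weighted by L,
   whereas the error of q is only controlled under the occupancy K of beta_k.  At
   step t the state-action distributions of beta_k and beta_{k+1} differ in l1 by
   at most (t+1) max_s |beta_k(s) - beta_{k+1}(s)|_1 <= 2 (t+1) delta (1 - gamma),
   hence |L - K|_1 <= 2 delta / (1 - gamma), and changing the weights costs at most
   |L - K|_1 / (1 - gamma). *)

Lemma is_dist_le1 (R : realType) (T : finType) (p : T -> R) x :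
  is_dist p -> p x <= 1.
Proof. by case=> p_ge0 <-; rewrite (bigD1 x) //= lerDl sumr_ge0. Qed.

Lemma sum_normB_dTV (R : realType) (T : finType) (p p' : T -> R) :
  \sum_x `|p x - p' x| = 2 * dTV p p'.
Proof. by rewrite /dTV mulrA mulfV ?mul1r // pnatr_eq0. Qed.

Lemma subr1_mul_sum_expr (R : comRingType) (g : R) n :
  (1 - g) * \sum_(0 <= t < n) g ^+ t = 1 - g ^+ n.
Proof.
elim: n => [|n IHn]; first by rewrite big_geq // expr0 mulr0 subrr.
by rewrite big_nat_recr //= mulrDr IHn exprS; ring.
Qed.

Lemma subr1_sqr_mul_sum_expr_succ (R : comRingType) (g : R) n :
  (1 - g) ^+ 2 * \sum_(0 <= t < n) g ^+ t * t.+1%:R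
  = 1 - n.+1%:R * g ^+ n + n%:R * g ^+ n.+1.
Proof.
elim: n => [|n IHn]; first by rewrite big_geq // mulr0; ring.
by rewrite big_nat_recr //= mulrDr IHn !exprS -!natr1; ring.
Qed.

Lemma sum_expr_le (R : realFieldType) (g : R) n : 0 <= g < 1 ->
  \sum_(0 <= t < n) g ^+ t <= (1 - g)^-1.
Proof.
case/andP=> g_ge0 g_lt1; have c_gt0 : 0 < 1 - g by rewrite subr_gt0.
rewrite -(ler_pM2l c_gt0) subr1_mul_sum_expr mulfV ?gt_eqF //.
by rewrite lerBlDr lerDl exprn_ge0.
Qed.

Lemma sum_expr_succ_le (R : realFieldType) (g : R) n : 0 <= g < 1 ->
  \sum_(0 <= t < n) g ^+ t * t.+1%:R <= (1 - g) ^- 2.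
Proof.
case/andP=> g_ge0 g_lt1; have c_gt0 : 0 < (1 - g) ^+ 2 by rewrite exprn_gt0 ?subr_gt0.
rewrite -(ler_pM2l c_gt0) subr1_sqr_mul_sum_expr_succ mulfV ?gt_eqF //.
have : 0 <= g ^+ n * (n%:R * (1 - g) + 1).
  by rewrite mulr_ge0 ?exprn_ge0 // addr_ge0 // mulr_ge0 // subr_ge0 ltW.
rewrite exprS -natr1; lra.
Qed.

Lemma sum_discounted_telescope (R : comRingType) (g : R) (r W : nat -> R) n :
  \sum_(0 <= t < n) g ^+ t * (r t + g * W t.+1 - W t)
  = \sum_(0 <= t < n) g ^+ t * r t + g ^+ n * W n - W 0%N.
Proof.
elim: n => [|n IHn]; first by rewrite !big_geq // expr0 mul1r; ring.
by rewrite !big_nat_recr //= IHn exprS; ring.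
Qed.

Lemma cvg_sum (R : realType) (I : finType) (u : I -> nat -> R) (l : I -> R) :
  (forall i, u i n @[n --> \oo] --> l i) ->
  (\sum_i u i n) @[n --> \oo] --> \sum_i l i.
Proof. by move=> u_cvg; apply: cvg_big => //; exact: add_continuous. Qed.

Lemma sum_reweight_ge (R : realDomainType) (I J : finType) (w w' f : I -> J -> R) B :
  (forall i j, 0 <= w i j) -> (forall i j, `|f i j| <= B) ->
  - \sum_i \sum_j w i j * `|f i j| - B * \sum_i \sum_j `|w' i j - w i j|
  <= \sum_i \sum_j w' i j * f i j.
Proof.
move=> w_ge0 f_le.
rewrite mulr_sumr -sumrN -sumrB; apply: ler_sum => i _.
rewrite mulr_sumr -sumrN -sumrB; apply: ler_sum => j _.
have -> : w' i j * f i j = w i j * f i j + (w' i j - w i j) * f i j by ring.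
apply: lerD.
  by rewrite -mulrN ler_wpM2l // lerNl -normrN ler_norm.
rewrite lerNl (le_trans (ler_norm _)) // normrN normrM mulrC.
by rewrite ler_wpM2r.
Qed.

Section Occupancy.
Variables (R : realType) (S A : finType) (P : S -> A -> S -> R) (s0 : S).
Hypothesis P_kernel : is_kernel P.

Lemma is_dist_state_dist pi t : is_policy pi -> is_dist (state_dist P pi s0 t).
Proof.
move=> pi_policy; elim: t => [|t [IHge0 IHsum]] /=.
  split=> [s|]; first by case: (s == s0).
  by rewrite (bigD1 s0) //= eqxx big1 ?addr0 // => s /negbTE ->.
split=> [s'|].
  apply: sumr_ge0 => s _; apply: sumr_ge0 => a _.
  by rewrite !mulr_ge0 //; [case: (pi_policy s) | case: (P_kernel s a)].
rewrite exchange_big /= -IHsum; apply: eq_bigr => s _.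
rewrite exchange_big /= -[RHS]mulr1 -(proj2 (pi_policy s)) mulr_sumr.
by apply: eq_bigr => a _; rewrite -mulr_sumr (proj2 (P_kernel s a)) mulr1.
Qed.

Lemma sum_sa_dist pi t s : is_policy pi ->
  \sum_a sa_dist P pi s0 t s a = state_dist P pi s0 t s.
Proof. by move=> pi_policy; rewrite -mulr_sumr (proj2 (pi_policy s)) mulr1. Qed.

Lemma sa_dist_ge0 pi t s a : is_policy pi -> 0 <= sa_dist P pi s0 t s a.
Proof.
move=> pi_policy; apply: mulr_ge0; last by case: (pi_policy s).
by case: (is_dist_state_dist t pi_policy).
Qed.

Lemma sa_dist_le1 pi t s a : is_policy pi -> sa_dist P pi s0 t s a <= 1.
Proof.
move=> pi_policy; have state_t := is_dist_state_dist t pi_policy.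
apply: mulr_ile1; [by case: state_t | by case: (pi_policy s) |
  exact: is_dist_le1 | exact: is_dist_le1].
Qed.

Lemma sum_state_dist_succ pi t (V : S -> R) :
  \sum_s' state_dist P pi s0 t.+1 s' * V s'
  = \sum_s \sum_a sa_dist P pi s0 t s a * \sum_s' P s a s' * V s'.
Proof.
transitivity (\sum_s' \sum_s \sum_a sa_dist P pi s0 t s a * P s a s' * V s').
  by apply: eq_bigr => s' _ /=; rewrite mulr_suml; apply: eq_bigr => s _; rewrite mulr_suml.
rewrite exchange_big /=; apply: eq_bigr => s _.
rewrite exchange_big /=; apply: eq_bigr => a _.
by rewrite mulr_sumr; apply: eq_bigr => s' _; rewrite mulrA.
Qed.

Lemma expected_bellman_residual (r : S -> A -> R) (g : R) (V : S -> R) pi t :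
  is_policy pi ->
  \sum_s \sum_a sa_dist P pi s0 t s a * (r s a + g * \sum_s' P s a s' * V s' - V s)
  = \sum_s \sum_a sa_dist P pi s0 t s a * r s a
    + g * \sum_s state_dist P pi s0 t.+1 s * V s
    - \sum_s state_dist P pi s0 t s * V s.
Proof.
move=> pi_policy.
have mean_V : \sum_s state_dist P pi s0 t s * V s
              = \sum_s \sum_a sa_dist P pi s0 t s a * V s.
  by apply: eq_bigr => s _; rewrite -mulr_suml sum_sa_dist.
rewrite sum_state_dist_succ mean_V mulr_sumr -big_split -sumrB /=.
apply: eq_bigr => s _; rewrite mulr_sumr -big_split -sumrB /=.
by apply: eq_bigr => a _; ring.
Qed.

Definition occupancy_partial (g : R) pi n s a :=
  \sum_(0 <= t < n) g ^+ t * sa_dist P pi s0 t s a.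

Definition occupancy (g : R) pi s a : R :=
  limn (fun n => occupancy_partial g pi n s a).

Lemma sum_dvisit_mul g pi (f : S -> A -> R) :
  \sum_s \sum_a dvisit P g pi s0 s a * f s a
  = (1 - g) * \sum_s \sum_a occupancy g pi s a * f s a.
Proof.
rewrite mulr_sumr; apply: eq_bigr => s _; rewrite mulr_sumr.
by apply: eq_bigr => a _; rewrite mulrA.
Qed.

Lemma sum_occupancy_partial_mul g pi n (f : S -> A -> R) :
  \sum_s \sum_a occupancy_partial g pi n s a * f s a
  = \sum_(0 <= t < n) g ^+ t * \sum_s \sum_a sa_dist P pi s0 t s a * f s a.
Proof.
under [RHS]eq_bigr do rewrite mulr_sumr.
rewrite [RHS]exchange_big /=; apply: eq_bigr => s _.
under [RHS]eq_bigr do rewrite mulr_sumr.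
rewrite [RHS]exchange_big /=; apply: eq_bigr => a _.
by rewrite mulr_suml; apply: eq_bigr => t _; rewrite mulrA.
Qed.

Lemma Vf_partial_telescope (r : S -> A -> R) g (V : S -> R) pi n :
  is_policy pi ->
  \sum_(0 <= t < n) g ^+ t * \sum_s \sum_a sa_dist P pi s0 t s a * r s a
  = \sum_s \sum_a occupancy_partial g pi n s a
                  * (r s a + g * \sum_s' P s a s' * V s' - V s)
    - g ^+ n * \sum_s state_dist P pi s0 n s * V s + V s0.
Proof.
move=> pi_policy.
have mean0 : \sum_s state_dist P pi s0 0 s * V s = V s0.
  by rewrite (bigD1 s0) //= eqxx mul1r big1 ?addr0 // => s /negbTE ->; rewrite mul0r.
rewrite sum_occupancy_partial_mul.
under [in RHS]eq_bigr do rewrite expected_bellman_residual //.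
rewrite sum_discounted_telescope /=; move: mean0 => /= ->; ring.
Qed.

Lemma state_dist_l1_step pi pi' t :
  \sum_s `|state_dist P pi' s0 t.+1 s - state_dist P pi s0 t.+1 s|
  <= \sum_s \sum_a `|sa_dist P pi' s0 t s a - sa_dist P pi s0 t s a|.
Proof.
apply: (@le_trans _ _ (\sum_s' \sum_s \sum_a
   `|sa_dist P pi' s0 t s a - sa_dist P pi s0 t s a| * P s a s')).
  apply: ler_sum => s' _; rewrite /= -sumrB.
  apply: le_trans (ler_norm_sum _ _ _) _; apply: ler_sum => s _.
  rewrite -sumrB; apply: le_trans (ler_norm_sum _ _ _) _; apply: ler_sum => a _.
  by rewrite -mulrBl normrM (ger0_norm (_ : 0 <= P s a s')) //; case: (P_kernel s a).
rewrite exchange_big /=; apply: ler_sum => s _.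
rewrite exchange_big /=; apply: ler_sum => a _.
by rewrite -mulr_sumr (proj2 (P_kernel s a)) mulr1.
Qed.

Section PolicyPerturbation.
Variables (pi pi' : S -> A -> R) (M : R).
Hypotheses (pi_policy : is_policy pi) (pi'_policy : is_policy pi').
Hypothesis pi_pi'_l1 : forall s, \sum_a `|pi s a - pi' s a| <= M.

Lemma sa_dist_l1_step t :
  \sum_s \sum_a `|sa_dist P pi' s0 t s a - sa_dist P pi s0 t s a|
  <= \sum_s `|state_dist P pi' s0 t s - state_dist P pi s0 t s| + M.
Proof.
set rho' := state_dist P pi' s0 t; set rho := state_dist P pi s0 t.
have [rho_ge0 rho_sum1] := is_dist_state_dist t pi_policy.
rewrite -[M]mul1r -rho_sum1 mulr_suml -big_split /=; apply: ler_sum => s _.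
apply: (@le_trans _ _ (\sum_a (`|rho' s - rho s| * pi' s a + rho s * `|pi s a - pi' s a|))).
  apply: ler_sum => a _; rewrite /sa_dist -/rho' -/rho.
  have -> : rho' s * pi' s a - rho s * pi s a
            = (rho' s - rho s) * pi' s a + rho s * (pi' s a - pi s a) by ring.
  apply: le_trans (ler_normD _ _) _.
  rewrite !normrM (ger0_norm (rho_ge0 s)) (distrC (pi' s a)).
  by rewrite (ger0_norm (_ : 0 <= pi' s a)) //; case: (pi'_policy s).
rewrite big_split /= -!mulr_sumr (proj2 (pi'_policy s)) mulr1.
by rewrite lerD2l ler_wpM2l.
Qed.

Lemma state_dist_l1_le t :
  \sum_s `|state_dist P pi' s0 t s - state_dist P pi s0 t s| <= t%:R * M.
Proof.
elim: t => [|t IHt].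
  by rewrite mul0r big1 // => s _; rewrite subrr normr0.
apply: le_trans (@state_dist_l1_step pi pi' t) _.
apply: le_trans (sa_dist_l1_step t) _.
by rewrite -natr1 mulrDl mul1r lerD2r.
Qed.

Lemma sa_dist_l1_le t :
  \sum_s \sum_a `|sa_dist P pi' s0 t s a - sa_dist P pi s0 t s a| <= t.+1%:R * M.
Proof.
apply: le_trans (sa_dist_l1_step t) _.
by rewrite -natr1 mulrDl mul1r lerD2r state_dist_l1_le.
Qed.

End PolicyPerturbation.

Section Discounted.
Variable g : R.
Hypotheses (g_ge0 : 0 <= g) (g_lt1 : g < 1).

Lemma nondecreasing_occupancy_partial pi s a : is_policy pi ->
  {homo (fun n => occupancy_partial g pi n s a) : n m / (n <= m)%N >-> n <= m}.
Proof.
move=> pi_policy n m le_nm; rewrite /occupancy_partial (big_cat_nat (leq0n n) le_nm) /=.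
by rewrite lerDl sumr_ge0 // => t _; rewrite mulr_ge0 ?exprn_ge0 ?sa_dist_ge0.
Qed.

Lemma cvg_occupancy_partial pi s a : is_policy pi ->
  occupancy_partial g pi n s a @[n --> \oo] --> occupancy g pi s a.
Proof.
move=> pi_policy; apply: nondecreasing_is_cvgn.
  exact: nondecreasing_occupancy_partial.
exists (1 - g)^-1 => _ [n _ <-]; apply: le_trans (sum_expr_le n _); last exact/andP.
by apply: ler_sum => t _; rewrite ler_piMr ?exprn_ge0 ?sa_dist_le1.
Qed.

Lemma occupancy_ge0 pi s a : is_policy pi -> 0 <= occupancy g pi s a.
Proof.
move=> pi_policy; have := nondecreasing_cvgn_le
  (nondecreasing_occupancy_partial s a pi_policy) (cvg_occupancy_partial pi_policy) 0.
by apply: le_trans; rewrite /occupancy_partial big_geq.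
Qed.

Lemma cvg_discounted_state_mean pi (V : S -> R) : is_policy pi ->
  g ^+ n * \sum_s state_dist P pi s0 n s * V s @[n --> \oo] --> 0.
Proof.
move=> pi_policy; set B := \sum_s `|V s|.
have mean_le n : `|\sum_s state_dist P pi s0 n s * V s| <= B.
  have rho_dist := is_dist_state_dist n pi_policy.
  apply: le_trans (ler_norm_sum _ _ _) _; apply: ler_sum => s _.
  rewrite normrM ger0_norm; last by case: rho_dist.
  by rewrite ler_piMl //; exact: is_dist_le1 rho_dist.
have g_norm : `|g| < 1 by rewrite ger0_norm.
apply: (@squeeze_cvgr _ _ _ _ (geometric (- B) g) (geometric B g)).
- apply: nearW => n /=; rewrite mulNr -ler_norml normrM ger0_norm ?exprn_ge0 //.
  by rewrite mulrC ler_wpM2r ?exprn_ge0.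
- exact: cvg_geometric.
- exact: cvg_geometric.
Qed.

Lemma performance_difference (r : S -> A -> R) (V : S -> R) pi : is_policy pi ->
  Vf P r g pi s0
  = \sum_s \sum_a occupancy g pi s a * (r s a + g * \sum_s' P s a s' * V s' - V s)
    + V s0.
Proof.
move=> pi_policy; rewrite /Vf.
under eq_fun do rewrite (Vf_partial_telescope _ _ V _ pi_policy).
apply: cvg_lim => //; rewrite -[X in _ --> X + _]subr0.
apply: cvgD; last exact: cvg_cst.
apply: cvgB; last exact: cvg_discounted_state_mean.
apply: cvg_sum => s; apply: cvg_sum => a; apply: cvgMl.
exact: cvg_occupancy_partial.
Qed.

Lemma occupancy_l1_le pi pi' M : is_policy pi -> is_policy pi' ->
  (forall s, \sum_a `|pi s a - pi' s a| <= M) ->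
  \sum_s \sum_a `|occupancy g pi' s a - occupancy g pi s a| <= M * (1 - g) ^- 2.
Proof.
move=> pi_policy pi'_policy pi_pi'_l1.
have l1_cvg : (\sum_s \sum_a `|occupancy_partial g pi' n s a - occupancy_partial g pi n s a|)
    @[n --> \oo] --> \sum_s \sum_a `|occupancy g pi' s a - occupancy g pi s a|.
  apply: cvg_sum => s; apply: cvg_sum => a; apply: cvg_norm.
  by apply: cvgB; exact: cvg_occupancy_partial.
rewrite -(cvg_lim _ l1_cvg) //; apply: limr_le; first exact: cvgP l1_cvg.
apply: nearW => n.
have M_ge0 : 0 <= M by apply: le_trans (pi_pi'_l1 s0); exact: sumr_ge0.
apply: (@le_trans _ _ (\sum_(0 <= t < n) g ^+ t * (t.+1%:R * M))); last first.
  under eq_bigr do rewrite mulrA.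
  by rewrite -mulr_suml [leLHS]mulrC ler_wpM2l // sum_expr_succ_le // g_ge0.
apply: (@le_trans _ _ (\sum_s \sum_a \sum_(0 <= t < n)
    g ^+ t * `|sa_dist P pi' s0 t s a - sa_dist P pi s0 t s a|)).
  apply: ler_sum => s _; apply: ler_sum => a _.
  rewrite -sumrB; apply: le_trans (ler_norm_sum _ _ _) _; apply: ler_sum => t _.
  by rewrite -mulrBr normrM ger0_norm ?exprn_ge0.
under eq_bigr do rewrite exchange_big /=.
rewrite exchange_big /=; apply: ler_sum => t _.
under eq_bigr do rewrite -mulr_sumr.
by rewrite -mulr_sumr ler_wpM2l ?exprn_ge0 ?sa_dist_l1_le.
Qed.

Lemma performance_difference_Qf (r : S -> A -> R) pi pi' : is_policy pi' ->
  Vf P r g pi' s0 - Vf P r g pi s0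
  = \sum_s \sum_a occupancy g pi' s a * (Qf P r g pi s a - Vf P r g pi s).
Proof. by move=> pi'_policy; rewrite (performance_difference r (Vf P r g pi)) // addrK. Qed.

End Discounted.
End Occupancy.

Theorem theorem2 (R : realType) (S A : finType)
  (P : S -> A -> S -> R) (r : S -> A -> R) (gamma : R) (s0 : S)
  (pi_k beta_k beta_k1 pi_k1 : S -> A -> R) (q : S -> A -> R) (delta eps : R) :
  is_kernel P ->
  (forall s a, 0 <= r s a <= 1) ->
  0 <= gamma < 1 ->
  is_policy pi_k -> is_policy beta_k -> is_policy beta_k1 ->
  pi_k1 = beta_k1 ->
  (forall s, dTV (beta_k s) (beta_k1 s) <= delta * (1 - gamma)) ->
  wQerr (Qf P r gamma pi_k) (dvisit P gamma beta_k s0) q <= eps ->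
  (forall s a, `|Qf P r gamma pi_k s a - q s a| <= (1 - gamma)^-1) ->
  Vf P r gamma pi_k1 s0 - Vf P r gamma pi_k s0 >=
    (1 - gamma)^-1 *
      (est_adv (dvisit P gamma pi_k1 s0) q (Vf P r gamma pi_k)
       - eps - 2 * delta / (1 - gamma)).
Proof.
move=> P_kernel _ /andP[g_ge0 g_lt1] _ betak_policy betak1_policy -> tv_le err_le Q_q_le.
set V := Vf P r gamma pi_k; set Q := Qf P r gamma pi_k.
set L := occupancy P s0 gamma beta_k1; set K := occupancy P s0 gamma beta_k.
have c_gt0 : 0 < 1 - gamma by rewrite subr_gt0.
have ci_ge0 : 0 <= (1 - gamma)^-1 by rewrite invr_ge0 ltW.
have K_ge0 s a : 0 <= K s a := occupancy_ge0 s0 P_kernel g_ge0 g_lt1 s a betak_policy.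
have err_K : \sum_s \sum_a K s a * `|Q s a - q s a| <= (1 - gamma)^-1 * eps.
  by rewrite ler_pdivlMl // -sum_dvisit_mul.
have L_K_l1 : \sum_s \sum_a `|L s a - K s a| <= 2 * delta / (1 - gamma).
  apply: le_trans (occupancy_l1_le (M := 2 * delta * (1 - gamma))
                     s0 P_kernel g_ge0 g_lt1 betak_policy betak1_policy _) _.
    by move=> s; rewrite sum_normB_dTV -mulrA ler_pM2l.
  by rewrite expr2 invfM mulrA mulfK ?gt_eqF.
have Q_V_split : \sum_s \sum_a L s a * (Q s a - V s)
    = \sum_s \sum_a L s a * (Q s a - q s a) + \sum_s \sum_a L s a * (q s a - V s).
  rewrite -big_split; apply: eq_bigr => s _; rewrite -big_split.
  by apply: eq_bigr => a _ /=; ring.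
have /= := @sum_reweight_ge _ _ _ K L (fun s a => Q s a - q s a) _ K_ge0 Q_q_le.
have := ler_wpM2l ci_ge0 L_K_l1.
rewrite (performance_difference_Qf s0 P_kernel g_ge0 g_lt1 _ _ betak1_policy).
rewrite Q_V_split /est_adv sum_dvisit_mul mulrBr mulrBr mulKf ?gt_eqF //; lra.
Qed.
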